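(* Let $M\geq 1$ and $P=4M-3$. Let $E$ be a $P\times P$ diagonal operator on $\ell(\mathbb{Z}_P)$ with diagonal entries $\{\omega_k\}_{k=0}^{4M-4}$ satisfying $|\omega_k|=1$ for all $k$ and $\omega_j\overline{\omega_k}\notin\mathbb{R}$ for all $j\neq k$. For $x\in\ell(\mathbb{Z}_P)$ with $x[p]=0$ for all $p=M,\ldots,4M-4$ (i.e. an $M$-dimensional complex signal embedded by zero-padding), the signal $x$ is determined up to a global phase factor by the pair $\operatorname{CirAut}(x+Rx)$ and $\operatorname{CirAut}(Ex+REx)$: if $x,y$ are two such signals with $\operatorname{CirAut}(x+Rx)=\operatorname{CirAut}(y+Ry)$ and $\operatorname{CirAut}(Ex+REx)=\operatorname{CirAut}(Ey+REy)$, then $y=\omega x$ for some $\omega\in\mathbb{C}$ with $|\omega|=1$.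
   Context: $\ell(\mathbb{Z}_P)$ denotes the space of $P$-periodic functions $u\colon\mathbb{Z}\to\mathbb{C}$ (i.e. $u[p+P]=u[p]$), with inner product $\langle u,v\rangle=\sum_{p\in\mathbb{Z}_P}u[p]\overline{v[p]}$. The translation operator is $(T^pu)[p']:=u[p'-p]$ and the reversal operator is $(Ru)[p]:=u[-p]$. The circular autocorrelation of $u$ is $\operatorname{CirAut}(u)\in\ell(\mathbb{Z}_P)$ with $\operatorname{CirAut}(u)[p]:=\langle u,T^pu\rangle=\sum_{p'\in\mathbb{Z}_P}u[p']\overline{u[p'-p]}$. The operator $E$ acts by $(Ex)[k]=\omega_kx[k]$ for $k=0,\ldots,P-1$. *)

From HB Require Import structures.
From mathcomp Require Import all_boot all_order all_algebra.
From mathcomp Require Import complex.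
From mathcomp Require Import reals.
Set Implicit Arguments. Unset Strict Implicit. Unset Printing Implicit Defensive.
Import Order.TTheory GRing.Theory Num.Theory.
Local Open Scope ring_scope.

Section Defs.
Variable C : numClosedFieldType.
Variable P : nat.

Definition signal := 'I_P -> C.

Definition subP (a b : 'I_P) : nat := ((a + (P - b)) %% P)%N.

Definition inner (u v : signal) : C := \sum_(p < P) u p * Num.conj (v p).

(* translation (T^p u)[p'] = u[p' - p] ; reversal (R u)[p] = u[-p] *)
Definition transl (p : 'I_P) (u : signal) : signal :=
  fun p' => u (@Ordinal P (subP p' p) (ltn_pmod _ (leq_ltn_trans (leq0n _) (ltn_ord p')))).

Definition revsig (u : signal) : signal :=
  fun p => u (@Ordinal P ((P - p) %% P)%N (ltn_pmod _ (leq_ltn_trans (leq0n _) (ltn_ord p)))).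

Definition CirAut (u : signal) : signal := fun p => inner u (transl p u).

Definition diagop (omega : 'I_P -> C) (x : signal) : signal := fun k => omega k * x k.

Definition addsig (u v : signal) : signal := fun p => u p + v p.
End Defs.

From HB Require Import structures.
From mathcomp Require Import all_boot all_order all_algebra.
From mathcomp Require Import complex.
From mathcomp Require Import reals.
From mathcomp Require Import zify ring.
From Stdlib Require Import FunctionalExtensionality.
Set Implicit Arguments. Unset Strict Implicit. Unset Printing Implicit Defensive.
Import Order.TTheory GRing.Theory Num.Theory.
Local Open Scope ring_scope.

(* For a zero-padded signal with coefficients c_0, ..., c_(M-1) and a lag
   l <= 2M - 2, the length P = 4M - 3 leaves enough room that no index wraps
   around, so CirAut(x + Rx)[l] is the Hermitian form
   sum_(i,k) c_i conj(c_k) W(l,i,k), where W(l,i,k) counts the identities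
   i + k = l, i = k + l, k = i + l, i + k + l = 0.
   Let L be the last index with x_L <> 0. At lag 2L only the (L,L) term
   survives, so y vanishes above L and |x_L| = |y_L|. Going down in m < L, at
   lag L + m every term of the difference of the two forms cancels except the
   (L,m) and (m,L) ones, so z = x_L conj(x_m) - y_L conj(y_m) satisfies
   z + conj z = 0, and the E-measurement gives c z + conj(c z) = 0 with
   c = omega_L conj(omega_m) non-real; hence z = 0. Thus
   x_L conj(x_m) = y_L conj(y_m) for every m, i.e. y = (y_L / x_L) x. *)

Definition lag_weight (l i k : nat) : nat :=
  ((i + k == l) + (i == k + l) + (k == i + l) + (i + k + l == 0))%N.

Lemma lag_weightC l i k : lag_weight l i k = lag_weight l k i.
Proof. rewrite /lag_weight; lia. Qed.

Lemma lag_weight_gt0 i k : (0 < lag_weight (i + k) i k)%N.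
Proof. rewrite /lag_weight; lia. Qed.

Lemma lag_weight_top T i k : (i <= T)%N -> (k <= T)%N -> (i != T) || (k != T) ->
  lag_weight (T + T) i k = 0%N.
Proof. by rewrite /lag_weight => hi hk /orP[] /eqP; lia. Qed.

Lemma lag_weight_cross L m i k : (m < L)%N -> (i <= L)%N -> (k <= L)%N ->
  (i <= m)%N || (k <= m)%N -> (i != L) || (k != m) -> (i != m) || (k != L) ->
  lag_weight (L + m) i k = 0%N.
Proof.
rewrite /lag_weight => hmL hi hk /orP[] ? /orP[] /eqP ? /orP[] /eqP ?; lia.
Qed.

Section DoubleSums.
Variables (C : numClosedFieldType) (N : nat).

Lemma sum2_delta (f : nat -> nat -> C) p q : (p < N)%N -> (q < N)%N ->
  (forall i k, (i < N)%N -> (k < N)%N -> (i != p) || (k != q) -> f i k = 0) ->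
  \sum_(i < N) \sum_(k < N) f i k = f p q.
Proof.
move=> hp hq hf; rewrite (bigD1 (Ordinal hp)) //= (bigD1 (Ordinal hq)) //=.
rewrite big1 ?addr0 => [|k hk]; last by rewrite hf ?ltn_ord ?hk ?orbT.
by rewrite big1 ?addr0 // => i hi; rewrite big1 // => k _; rewrite hf ?ltn_ord ?hi.
Qed.

Lemma sum2_delta2 (f : nat -> nat -> C) p q : (p < N)%N -> (q < N)%N -> p != q ->
  (forall i k, (i < N)%N -> (k < N)%N ->
     (i != p) || (k != q) -> (i != q) || (k != p) -> f i k = 0) ->
  \sum_(i < N) \sum_(k < N) f i k = f p q + f q p.
Proof.
move=> hp hq hpq hf.
pose fpq i k := if (i == p) && (k == q) then f i k else 0.
have -> : \sum_(i < N) \sum_(k < N) f i k =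
    \sum_(i < N) \sum_(k < N) fpq i k + \sum_(i < N) \sum_(k < N) (f i k - fpq i k).
  rewrite -big_split; apply: eq_bigr => i _; rewrite -big_split; apply: eq_bigr => k _.
  by rewrite /= addrC subrK.
rewrite (sum2_delta (f := fpq) hp hq) => [|i k _ _]; last first.
  by rewrite /fpq -negb_and => /negbTE ->.
rewrite (sum2_delta (f := fun i k => f i k - fpq i k) hq hp) => [|i k hi hk hqp].
  by rewrite /fpq !eqxx eq_sym (negbTE hpq) subr0.
rewrite /fpq; case: ifP => [_|/negbT]; first by rewrite subrr.
by rewrite negb_and subr0 => /hf ->.
Qed.

End DoubleSums.

Section LagForm.
Variables (C : numClosedFieldType) (N : nat).

Definition lagform (c : nat -> C) (l : nat) : C :=
  \sum_(i < N) \sum_(k < N) c i * (c k)^* * (lag_weight l i k)%:R.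

Lemma eq_lagform (c c' : nat -> C) l : c =1 c' -> lagform c l = lagform c' l.
Proof. by move=> e; apply: eq_bigr => i _; apply: eq_bigr => k _; rewrite !e. Qed.

Lemma lagformB_mul (om c c' : nat -> C) l :
  lagform (fun n => om n * c n) l - lagform (fun n => om n * c' n) l =
  \sum_(i < N) \sum_(k < N)
    om i * (om k)^* * (c i * (c k)^* - c' i * (c' k)^*) * (lag_weight l i k)%:R.
Proof.
rewrite -sumrB; apply: eq_bigr => i _; rewrite -sumrB; apply: eq_bigr => k _.
by rewrite !rmorphM /=; ring.
Qed.

Lemma lagform_top (c : nat -> C) T : (T < N)%N -> (forall n, (T < n)%N -> c n = 0) ->
  lagform c (T + T) = c T * (c T)^* * (lag_weight (T + T) T T)%:R.
Proof.
move=> hT hc; apply: (sum2_delta (f := fun i k => c i * (c k)^* * _)) => // i k _ _ hik.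
case: (ltnP T i) => [/hc -> | hi]; first by rewrite !mul0r.
case: (ltnP T k) => [/hc -> | hk]; first by rewrite conjC0 mulr0 mul0r.
by rewrite lag_weight_top // mulr0.
Qed.

End LagForm.

Lemma lag_weight_natr_neq0 {C : numDomainType} i k : (lag_weight (i + k) i k)%:R != 0 :> C.
Proof. by rewrite pnatr_eq0 -lt0n lag_weight_gt0. Qed.

(* The rank-one matrix (x_i conj(x_k)) is determined by its row at a pivot u. *)
Lemma mul_conj_pivot (C : numClosedFieldType) (u x y : C) : u != 0 ->
  x * y^* = (u * x^*)^* * (u * y^*) / (u * u^*).
Proof.
move=> u0; have uu0 : u * u^* != 0 by rewrite mul_conjC_eq0.
apply: (mulIf uu0); rewrite divfK // rmorphM /= conjCK.
by rewrite [RHS]mulrACA mulrC [u^* * u]mulrC.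
Qed.

Lemma nonreal_conj_cancel (C : numClosedFieldType) (c z : C) : c \notin Num.real ->
  z + z^* = 0 -> c * z + c^* * z^* = 0 -> z = 0.
Proof.
rewrite CrealE => cnr /eqP; rewrite addrC addr_eq0 => /eqP -> e.
have : (c - c^*) * z = 0 by rewrite -[RHS]e; ring.
by move/eqP; rewrite mulf_eq0 subr_eq0 eq_sym (negbTE cnr) => /eqP.
Qed.

Section Uniqueness.
Variables (C : numClosedFieldType) (N M : nat) (a b om : nat -> C).
Hypothesis hMN : (M <= N)%N.
Hypothesis ha : forall n, (M <= n)%N -> a n = 0.
Hypothesis hb : forall n, (M <= n)%N -> b n = 0.
Hypothesis hab : forall l, (l <= 2 * M - 2)%N -> lagform N a l = lagform N b l.
Hypothesis hom : forall l, (l <= 2 * M - 2)%N ->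
  lagform N (fun n => om n * a n) l = lagform N (fun n => om n * b n) l.
Hypothesis hom_nreal : forall j k, (j < N)%N -> (k < N)%N -> j != k ->
  om j * (om k)^* \notin Num.real.

Lemma vanish_transfer T : (forall n, (T <= n)%N -> a n = 0) ->
  forall n, (T <= n)%N -> b n = 0.
Proof.
move=> haT n hTn; have [d hd] : exists d, (M <= n + d)%N by exists M; lia.
elim: d n hTn hd => [|d IH] n hTn hMn; first by apply: hb; lia.
have [hnM|hnM] := leqP M n; first exact: hb.
have hbig m : (n < m)%N -> b m = 0 by move=> ?; apply: IH; lia.
have habig m : (n < m)%N -> a m = 0 by move=> ?; apply: haT; lia.
have hnN : (n < N)%N by lia.
have := hab (l := n + n) ltac:(lia).
rewrite (lagform_top hnN habig) (lagform_top hnN hbig) (haT n hTn) !mul0r => /esym/eqP.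
by rewrite mulf_eq0 (negbTE (lag_weight_natr_neq0 n n)) orbF mul_conjC_eq0 => /eqP.
Qed.

Section Leading.
Variable L : nat.
Hypothesis hLM : (L < M)%N.
Hypothesis haL : a L != 0.
Hypothesis ha_gt : forall n, (L < n)%N -> a n = 0.

Let hLN : (L < N)%N. Proof. lia. Qed.
Let hb_gt : forall n, (L < n)%N -> b n = 0 := vanish_transfer ha_gt.

Lemma lead_sqnorm_eq : a L * (a L)^* = b L * (b L)^*.
Proof.
have := hab (l := L + L) ltac:(lia).
rewrite (lagform_top hLN ha_gt) (lagform_top hLN hb_gt).
exact/mulIf/lag_weight_natr_neq0.
Qed.

Let hbL : b L != 0.
Proof. by rewrite -mul_conjC_eq0 -lead_sqnorm_eq mul_conjC_eq0. Qed.

Lemma lagformB_cross m (g : nat -> nat -> C) : (m < L)%N ->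
    (forall i k, (m < i <= L)%N -> (m < k <= L)%N -> a i * (a k)^* = b i * (b k)^*) ->
  \sum_(i < N) \sum_(k < N)
      g i k * (a i * (a k)^* - b i * (b k)^*) * (lag_weight (L + m) i k)%:R
    = (g L m * (a L * (a m)^* - b L * (b m)^*)
       + g m L * (a L * (a m)^* - b L * (b m)^*)^*) * (lag_weight (L + m) L m)%:R.
Proof.
move=> hmL hgram; rewrite (sum2_delta2
  (f := fun i k => g i k * (a i * (a k)^* - b i * (b k)^*) * (lag_weight (L + m) i k)%:R)
  hLN (q := m) ltac:(lia) (negbT (gtn_eqF hmL))); last first.
  move=> i k _ _ hLm hmL'.
  have [hi|hi] := ltnP L i.
    by rewrite (ha_gt hi) (hb_gt hi) !mul0r subrr mulr0 mul0r.
  have [hk|hk] := ltnP L k.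
    by rewrite (ha_gt hk) (hb_gt hk) conjC0 !mulr0 subrr mulr0 mul0r.
  have [hik|] := boolP ((i <= m) || (k <= m))%N; first by rewrite lag_weight_cross // mulr0.
  rewrite negb_or -!ltnNge => /andP[hmi hmk].
  by rewrite hgram ?hmi ?hmk ?hi ?hk // subrr mulr0 mul0r.
rewrite (lag_weightC _ m L) rmorphB /= !rmorphM /= !conjCK.
by rewrite [a m * _]mulrC [b m * _]mulrC; ring.
Qed.

Lemma lead_cross_step m : (m < L)%N ->
    (forall i, (m < i <= L)%N -> a L * (a i)^* = b L * (b i)^*) ->
  a L * (a m)^* = b L * (b m)^*.
Proof.
move=> hmL hcross.
have hgram i k : (m < i <= L)%N -> (m < k <= L)%N -> a i * (a k)^* = b i * (b k)^*.
  move=> hi hk; rewrite (mul_conj_pivot (a i) (a k) haL) (mul_conj_pivot (b i) (b k) hbL).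
  by rewrite -lead_sqnorm_eq (hcross i hi) (hcross k hk).
set z := a L * (a m)^* - b L * (b m)^*.
have W0 := lag_weight_natr_neq0 (C := C) L m.
have hz : z + z^* = 0.
  have /eqP := hab (l := L + m) ltac:(lia).
  rewrite -(eq_lagform _ _ (fun n => mul1r (a n))) -(eq_lagform _ _ (fun n => mul1r (b n))).
  rewrite -subr_eq0 lagformB_mul (lagformB_cross (fun _ _ => 1 * 1^*) hmL hgram) -/z.
  by rewrite conjC1 !mulr1 !mul1r mulf_eq0 (negbTE W0) orbF => /eqP.
set c := om L * (om m)^*.
have hcz : c * z + c^* * z^* = 0.
  have /eqP := hom (l := L + m) ltac:(lia).
  rewrite -subr_eq0 lagformB_mul (lagformB_cross (fun i k => om i * (om k)^*) hmL hgram).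
  rewrite -/z mulf_eq0 (negbTE W0) orbF.
  by rewrite /c rmorphM /= conjCK [(om L)^* * _]mulrC => /eqP.
have hc : c \notin Num.real by apply: hom_nreal; rewrite ?(negbT (gtn_eqF hmL)); lia.
by apply/eqP; rewrite -subr_eq0 -/z (nonreal_conj_cancel hc hz hcz).
Qed.

Lemma lead_cross_eq m : (m <= L)%N -> a L * (a m)^* = b L * (b m)^*.
Proof.
move=> hmL; have [d hd] := ubnP (L - m); elim: d m hmL hd => // d IH m hmL hd.
have [->|hm] := eqVneq m L; first exact: lead_sqnorm_eq.
by apply: lead_cross_step => [|i /andP[hmi hiL]]; [lia | apply: IH; lia].
Qed.

Lemma lead_phase : exists w : C, `|w| = 1 /\ forall n, b n = w * a n.
Proof.
have nabs : `|a L| = `|b L|.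
  by apply/eqP; rewrite -(eqrXn2 (n := 2)) ?normr_ge0 // !normCK lead_sqnorm_eq.
exists (b L / a L); split; first by rewrite normf_div nabs divff // normr_eq0.
move=> n; have [hn|hn] := ltnP L n; first by rewrite (ha_gt hn) (hb_gt hn) mulr0.
have e : (a L)^* * a n = (b L)^* * b n.
  by have := congr1 Num.conj (lead_cross_eq hn); rewrite !rmorphM /= !conjCK.
apply: (@mulfI _ (b L)^*); first by rewrite conjC_eq0.
by rewrite -e !mulrA [(b L)^* * b L]mulrC -lead_sqnorm_eq; field.
Qed.

End Leading.

Lemma lagform_phase_retrieval : exists w : C, `|w| = 1 /\ forall n, b n = w * a n.
Proof.
have [ex|/existsPn a0] := boolP [exists i : 'I_M, a i != 0]; last first.
  have {}a0 n : (0 <= n)%N -> a n = 0.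
    by move=> _; have [hn|/ha//] := ltnP n M; apply/eqP/negPn/(a0 (Ordinal hn)).
  by exists 1; rewrite normr1; split=> // n; rewrite mul1r a0 ?(vanish_transfer a0).
have exL : exists n, (n < M)%N && (a n != 0).
  by case/existsP: ex => i hi; exists i; rewrite ltn_ord.
have [L /andP[hLM haL] hmax] := ex_maxnP exL (fun n h => ltnW (proj1 (andP h))).
apply: (lead_phase hLM haL) => n hLn.
have [hnM|/ha//] := ltnP n M.
by apply/eqP; apply: contraTT hLn => an; rewrite -leqNgt hmax ?hnM.
Qed.

End Uniqueness.

Lemma modn_double_cases v P : (v < P + P)%N ->
  ((v < P) /\ v %% P = v \/ (P <= v) /\ v %% P = v - P)%N.
Proof.
move=> h; have [hv|hv] := ltnP v P; first by left; rewrite modn_small.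
by right; split=> //; rewrite -{1}(subnK hv) modnDr modn_small //; lia.
Qed.

(* Replaces each innermost [v %% Q] (with [v < Q + Q] provable by lia) by [v]
   or [v - Q], splitting the goal accordingly. *)
Ltac elim_modn := repeat match goal with |- context [(?v %% ?Q)%N] =>
  lazymatch v with context [modn _ _] => fail | _ => idtac end;
  have [[? ->]|[? ->]] := modn_double_cases (v := v) (P := Q) ltac:(lia) end.

Section Bridge.
Variables (C : numClosedFieldType) (M P : nat).
Hypothesis hM : (1 <= M)%N.
Hypothesis hP : P = (4 * M - 3)%N.

Definition padded (u : 'I_P -> C) := forall p : 'I_P, (M <= p)%N -> u p = 0.

Definition zero_ext (u : 'I_P -> C) (n : nat) : C :=
  if insub n is Some i then u i else 0.

Lemma zero_extE u (i : 'I_P) : zero_ext u i = u i.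
Proof. by rewrite /zero_ext valK. Qed.

Lemma zero_ext_padded u : padded u -> forall n, (M <= n)%N -> zero_ext u n = 0.
Proof. by move=> hu n hn; rewrite /zero_ext; case: insubP => // i _ hi; rewrite hu ?hi. Qed.

Lemma zero_ext_diagop om u : zero_ext (diagop om u) =1 fun n => zero_ext om n * zero_ext u n.
Proof. by move=> n; rewrite /zero_ext; case: insub => //; rewrite mul0r. Qed.

Lemma padded_diagop om u : padded u -> padded (diagop om u).
Proof. by move=> hu p hp; rewrite /diagop hu ?mulr0. Qed.

Lemma zero_ext_nonreal (om : 'I_P -> C) :
    (forall j k : 'I_P, j != k -> om j * (om k)^* \notin Num.real) ->
  forall j k, (j < P)%N -> (k < P)%N -> j != k ->
    zero_ext om j * (zero_ext om k)^* \notin Num.real.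
Proof.
move=> hom j k hj hk hjk.
by rewrite -[j]/(Ordinal hj : nat) -[k]/(Ordinal hk : nat) !zero_extE hom.
Qed.

Lemma sum_eqn_mul s t : (s < P)%N ->
  (\sum_(p < P) (((p : nat) == s) * ((p : nat) == t)))%N = (s == t).
Proof.
move=> hs; rewrite (bigD1 (Ordinal hs)) //= eqxx mul1n big1 ?addn0 // => p hp.
by rewrite -(inj_eq val_inj) /= in hp; rewrite (negbTE hp).
Qed.

Lemma sum_pair_indicators s s' t t' : (s < P)%N -> (s' < P)%N ->
  (\sum_(p < P) (((p : nat) == s) + ((p : nat) == s')) *
                (((p : nat) == t) + ((p : nat) == t')))%N
  = ((s == t) + (s == t') + (s' == t) + (s' == t'))%N.
Proof.
move=> hs hs'.
rewrite (eq_bigr _ (fun p _ => mulnDl _ _ _)) big_split /=.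
rewrite (eq_bigr _ (fun p _ => mulnDr _ _ _)) big_split /=.
rewrite (eq_bigr _ (fun p _ => mulnDr _ _ _)) big_split /=.
by rewrite !sum_eqn_mul // addnA.
Qed.

Lemma wrapped_lag_weight i k l : (i < M)%N -> (k < M)%N -> (l <= 2 * M - 2)%N ->
  ((i == (k + l) %% P) + (i == (l + P - k) %% P)
   + ((P - i) %% P == (k + l) %% P) + ((P - i) %% P == (l + P - k) %% P))%N
  = lag_weight l i k.
Proof.
move=> hi hk hl.
have -> : ((i == (k + l) %% P) = (i == k + l))%N by elim_modn; apply/eqP/eqP; lia.
have -> : ((i == (l + P - k) %% P) = (i + k == l))%N by elim_modn; apply/eqP/eqP; lia.
have -> : (((P - i) %% P == (k + l) %% P) = (i + k + l == 0))%N.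
  by elim_modn; apply/eqP/eqP; lia.
have -> : (((P - i) %% P == (l + P - k) %% P) = (k == i + l))%N.
  by elim_modn; apply/eqP/eqP; lia.
rewrite /lag_weight; lia.
Qed.

Lemma lag_count i k l : (i < M)%N -> (k < M)%N -> (l <= 2 * M - 2)%N ->
  (\sum_(p < P) ((((p : nat) == i) + ((P - p) %% P == i)) *
      (((p + (P - l)) %% P == k) + ((P - (p + (P - l)) %% P) %% P == k))))%N
  = lag_weight l i k.
Proof.
move=> hi hk hl.
have e (p : 'I_P) : ((((p : nat) == i) + ((P - p) %% P == i)) *
      (((p + (P - l)) %% P == k) + ((P - (p + (P - l)) %% P) %% P == k)) =
   (((p : nat) == i) + ((p : nat) == (P - i) %% P)) *
   (((p : nat) == (k + l) %% P) + ((p : nat) == (l + P - k) %% P)))%N.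
  have hp := ltn_ord p.
  have -> : (((P - p) %% P == i) = ((p : nat) == (P - i) %% P))%N.
    by elim_modn; apply/eqP/eqP; lia.
  have -> : (((p + (P - l)) %% P == k) = ((p : nat) == (k + l) %% P))%N.
    by elim_modn; apply/eqP/eqP; lia.
  have -> : (((P - (p + (P - l)) %% P) %% P == k) = ((p : nat) == (l + P - k) %% P))%N.
    by elim_modn; apply/eqP/eqP; lia.
  by [].
rewrite (eq_bigr _ (fun p _ => e p)) sum_pair_indicators.
- exact: wrapped_lag_weight.
- lia.
- by apply: ltn_pmod; lia.
Qed.

Lemma signal_delta_sum (u : 'I_P -> C) (q : 'I_P) :
  u q = \sum_(i < P) u i * ((q : nat) == (i : nat))%:R.
Proof.
rewrite (bigD1 q) //= eqxx mulr1 big1 ?addr0 // => i hi.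
by rewrite (inj_eq val_inj) eq_sym (negbTE hi) mulr0.
Qed.

Lemma mul_conj_sums (u : 'I_P -> C) (A B : 'I_P -> nat) :
  (\sum_(i < P) u i * (A i)%:R) * (\sum_(k < P) u k * (B k)%:R)^* =
  \sum_(i < P) \sum_(k < P) u i * (u k)^* * (A i * B k)%:R.
Proof.
rewrite rmorph_sum mulr_suml; apply: eq_bigr => i _; rewrite mulr_sumr.
by apply: eq_bigr => k _; rewrite rmorphM /= conjC_nat natrM; ring.
Qed.

Lemma CirAut_sym_lagform (u : 'I_P -> C) (l : 'I_P) : padded u -> (l <= 2 * M - 2)%N ->
  CirAut (addsig u (revsig u)) l = lagform P (zero_ext u) l.
Proof.
move=> hu hl; rewrite /CirAut /inner /transl /addsig /revsig /lagform /subP /=.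
have usum (q q' : 'I_P) : u q + u q' =
    \sum_(i < P) u i * (((q : nat) == (i : nat)) + ((q' : nat) == (i : nat)))%:R.
  rewrite (signal_delta_sum u q) (signal_delta_sum u q') -big_split.
  by apply: eq_bigr => i _; rewrite natrD mulrDr.
under eq_bigr => p _ do rewrite !usum mul_conj_sums.
rewrite exchange_big; apply: eq_bigr => i _.
rewrite exchange_big; apply: eq_bigr => k _.
rewrite !zero_extE -mulr_sumr -natr_sum.
have [hiM|hiM] := ltnP i M; last by rewrite hu // !mul0r.
have [hkM|hkM] := ltnP k M; last by rewrite (hu k) // conjC0 !mulr0 !mul0r.
by rewrite /= lag_count.
Qed.

Lemma lagform_eq_of_CirAut_eq (u v : 'I_P -> C) : padded u -> padded v ->
  CirAut (addsig u (revsig u)) = CirAut (addsig v (revsig v)) ->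
  forall l, (l <= 2 * M - 2)%N -> lagform P (zero_ext u) l = lagform P (zero_ext v) l.
Proof.
move=> hu hv huv l hl; have hlP : (l < P)%N by lia.
rewrite -(CirAut_sym_lagform (l := Ordinal hlP) hu) //.
by rewrite -(CirAut_sym_lagform (l := Ordinal hlP) hv) // huv.
Qed.

End Bridge.

Theorem theorem5 (R : realType) (M : nat) (hM : (1 <= M)%N)
  (omega : 'I_(4 * M - 3) -> R[i])
  (homega_norm : forall k, `|omega k| = 1)
  (homega_nreal : forall j k : 'I_(4 * M - 3), j != k ->
      omega j * Num.conj (omega k) \notin Num.real)
  (x y : 'I_(4 * M - 3) -> R[i])
  (hx : forall p : 'I_(4 * M - 3), (M <= p)%N -> x p = 0)
  (hy : forall p : 'I_(4 * M - 3), (M <= p)%N -> y p = 0)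
  (h1 : CirAut (addsig x (revsig x)) = CirAut (addsig y (revsig y)))
  (h2 : CirAut (addsig (diagop omega x) (revsig (diagop omega x)))
        = CirAut (addsig (diagop omega y) (revsig (diagop omega y)))) :
  exists w : R[i], `|w| = 1 /\ y = (fun p => w * x p).
Proof.
have hMP : (M <= 4 * M - 3)%N by lia.
have hxy := lagform_eq_of_CirAut_eq hM erefl hx hy h1.
have hExy l : (l <= 2 * M - 2)%N ->
    lagform (4 * M - 3) (fun n => zero_ext omega n * zero_ext x n) l =
    lagform (4 * M - 3) (fun n => zero_ext omega n * zero_ext y n) l.
  rewrite -!(eq_lagform _ _ (zero_ext_diagop omega _)).
  exact: (lagform_eq_of_CirAut_eq hM erefl (padded_diagop _ hx) (padded_diagop _ hy) h2).
have [w [w1 hw]] := lagform_phase_retrieval hMP (zero_ext_padded hx) (zero_ext_padded hy)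
  hxy hExy (zero_ext_nonreal homega_nreal).
exists w; split=> //; apply: functional_extensionality => p.
by rewrite -!zero_extE hw.
Qed.
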